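(* Let $S=\mathbb{C}[x_{ij}: 1\le i\le 4,\ 1\le j\le 3]$, let $M=(x_{ij})$ be the generic $4\times 3$ matrix, and for $i=1,2,3$ let $f_i$ be the determinant of the $3\times 3$ submatrix of $M$ obtained by deleting row $i$. Then $f_1,f_2,f_3$ are cubic forms that do not form a regular sequence and whose collective strength is exactly $2$. Consequently $N(3,3)>2$.
   Context: The strength of a homogeneous element $f$ of a standard graded polynomial ring is the minimal integer $s\ge 0$ such that $f=\sum_{i=1}^{s+1}g_ih_i$ with all $g_i,h_i$ homogeneous of positive degree (or $\infty$ if none exists); constants, including $0$, have strength $-1$. The collective strength of a finite set of homogeneous elements of the same degree is the minimal strength of a nontrivial $\mathbb{C}$-linear combination of them. $N(r,d)$ denotes the least integer $N$ such that any $r$ homogeneous polynomials of degree $d$ with collective strength at least $N$ form a regular sequence. *)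

From mathcomp Require Import all_boot all_algebra.
From mathcomp Require Import mpoly.
From mathcomp Require Import complex.
From mathcomp Require Import reals Rstruct.
Set Implicit Arguments. Unset Strict Implicit. Unset Printing Implicit Defensive.
Import GRing.Theory.
Local Open Scope ring_scope.

Definition CC : numClosedFieldType := (Rdefinitions.R)[i].

Section Defs.
Variable n : nat.
Local Notation S := {mpoly CC[n]}.

Definition homog_pos (g : S) : Prop := exists d : nat, (0 < d)%N /\ g \is d.-homog.

Definition is_const (f : S) : Prop := exists c : CC, f = c%:MP.

Definition strength_le (f : S) (s : nat) : Prop :=
  exists g h : 'I_s.+1 -> S,
    (forall i, homog_pos (g i) /\ homog_pos (h i)) /\
    f = \sum_(i < s.+1) g i * h i.

(* strength f = s (s : int, with -1 for constants); "strength = infinity"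
   corresponds to no finite s satisfying this predicate *)
Definition strength_is (f : S) (s : int) : Prop :=
  (is_const f /\ s = (-1)%R) \/
  (~ is_const f /\ exists m : nat, s = m%:Z /\ strength_le f m /\
      forall k : nat, (k < m)%N -> ~ strength_le f k).

Definition lincomb r (fs : 'I_r -> S) (c : 'I_r -> CC) : S :=
  \sum_(i < r) c i *: fs i.

Definition nontrivial r (c : 'I_r -> CC) : Prop := exists i, c i != 0.

Definition coll_strength_ge r (fs : 'I_r -> S) (N : int) : Prop :=
  forall c, nontrivial c -> forall s : int, strength_is (lincomb fs c) s -> (N <= s)%R.

Definition coll_strength_is r (fs : 'I_r -> S) (N : int) : Prop :=
  coll_strength_ge fs N /\
  exists c, nontrivial c /\ strength_is (lincomb fs c) N.

Definition in_ideal_first r (fs : 'I_r -> S) (k : nat) (g : S) : Prop :=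
  exists a : 'I_r -> S, g = \sum_(i < r | (i < k)%N) a i * fs i.

Definition regular_seq r (fs : 'I_r -> S) : Prop :=
  (forall i : 'I_r, forall g : S,
      in_ideal_first fs i (g * fs i) -> in_ideal_first fs i g) /\
  ~ in_ideal_first fs r 1.

End Defs.

(* "N(r,d) > N": there is a polynomial ring C[x_1..x_n] and r forms of degree d
   with collective strength >= N that are not a regular sequence. Since the
   property "coll. strength >= N implies regular" is monotone in N, this is
   exactly the statement that the least such N, N(r,d), exceeds N. *)
Definition N_gt (r d : nat) (N : int) : Prop :=
  exists (n : nat) (fs : 'I_r -> {mpoly CC[n]}),
    (forall i, fs i \is d.-homog) /\ coll_strength_ge fs N /\ ~ regular_seq fs.

Definition genmx : 'M[{mpoly CC[12]}]_(4, 3) :=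
  \matrix_(i < 4, j < 3) 'X_(inord (i * 3 + j)).

(* f_i = maximal minor obtained by deleting row i (i = 0,1,2 here, i.e. 1,2,3) *)
Definition maxminor (i : 'I_3) : {mpoly CC[12]} :=
  \det (row' (widen_ord (leqnSn 3) i) genmx).

(* Upper bound: Laplace expansion writes f_1 as a sum of three products of a
   linear and a quadratic form.  Lower bound: restrict a combination
   F = sum_i c_i f_i with c_k <> 0 to the 4x3 matrices whose k-th row vanishes;
   there F becomes c_k * det m, where m is the 3x3 matrix of the other rows.  A
   decomposition of strength at most 1 of the cubic F has a degree-3 part of the
   form l_0 q_0 + l_1 q_1 with l_0, l_1 linear, so c_k * det m would vanish on
   the common kernel of l_0 and l_1; but every subspace of codimension 2 of the
   3x3 matrices contains an invertible matrix.  The failure of regularity comes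
   from the syzygies of the maximal minors. *)

From mathcomp Require Import all_boot all_algebra.
From mathcomp Require Import mpoly.
From mathcomp Require Import complex reals Rstruct.
From mathcomp Require Import ring zify.
Set Implicit Arguments. Unset Strict Implicit. Unset Printing Implicit Defensive.
Import GRing.Theory.
Local Open Scope ring_scope.

Section ThreeByThree.
Variable R : comNzRingType.
Implicit Types (f m p : nat -> nat -> R) (a b c d : nat).

Definition det3 f : R :=
  f 0 0 * (f 1 1 * f 2 2 - f 1 2 * f 2 1) - f 0 1 * (f 1 0 * f 2 2 - f 1 2 * f 2 0)
  + f 0 2 * (f 1 0 * f 2 1 - f 1 1 * f 2 0).

Definition frob p m : R :=
  p 0 0 * m 0 0 + p 0 1 * m 0 1 + p 0 2 * m 0 2 +
  p 1 0 * m 1 0 + p 1 1 * m 1 1 + p 1 2 * m 1 2 +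
  p 2 0 * m 2 0 + p 2 1 * m 2 1 + p 2 2 * m 2 2.

Definition unit_mx3 a b (i j : nat) : R := ((i == a) && (j == b))%:R.

Definition perms3 : seq (seq nat) :=
  [:: [:: 0; 1; 2]; [:: 1; 2; 0]; [:: 2; 0; 1]; [:: 0; 2; 1]; [:: 2; 1; 0]; [:: 1; 0; 2]]%N.

Definition third a c : nat := (3 - a - c)%N.

Definition avoids a b c d (s : seq nat) : bool :=
  [&& nth 0 s a != b, nth 0 s c != d &
      [|| a == c, b == d | nth 0 s (third a c) != third b d]].

Definition perm_mx3 a b c d (i j : nat) : R :=
  (nth 0 (nth [::] perms3 (find (avoids a b c d) perms3)) i == j)%:R.

Lemma sqr1_neq0 (x : R) : x ^+ 2 = 1 -> x != 0.
Proof. by apply: contra_eqN => /eqP ->; rewrite expr0n eq_sym oner_eq0. Qed.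

(* The chosen permutation avoids (a, b) and (c, d) and, when these lie in distinct
   rows and columns, the position completing them to a transversal; so no term of
   the determinant involves [s] or [r], and it stays the sign of the permutation. *)
Lemma det3_perm_mx3_shift a b c d s r :
  (a < 3)%N -> (b < 3)%N -> (c < 3)%N -> (d < 3)%N -> (a != c) || (b != d) ->
  det3 (fun i j => perm_mx3 a b c d i j + s * unit_mx3 a b i j + r * unit_mx3 c d i j) != 0.
Proof.
case: a => [|[|[|//]]] _; case: b => [|[|[|//]]] _;
case: c => [|[|[|//]]] _; case: d => [|[|[|//]]] _ //= _.
all: apply: sqr1_neq0; rewrite /det3 /perm_mx3 /unit_mx3 /=; ring.
Qed.

Lemma frob_shift p m a b c d s r :
  (a < 3)%N -> (b < 3)%N -> (c < 3)%N -> (d < 3)%N ->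
  frob p (fun i j => m i j + s * unit_mx3 a b i j + r * unit_mx3 c d i j) =
  frob p m + s * p a b + r * p c d.
Proof.
case: a => [|[|[|//]]] _; case: b => [|[|[|//]]] _;
case: c => [|[|[|//]]] _; case: d => [|[|[|//]]] _.
all: rewrite /frob /unit_mx3 /=; ring.
Qed.

End ThreeByThree.

Section InvertibleInKernel.
Variable F : fieldType.
Implicit Types (p q m : nat -> nat -> F).

Lemma invertible_in_kernel2_of_minor p q a b c d :
  (a < 3)%N -> (b < 3)%N -> (c < 3)%N -> (d < 3)%N ->
  p a b * q c d - p c d * q a b != 0 ->
  exists m, [/\ frob p m = 0, frob q m = 0 & det3 m != 0].
Proof.
move=> ha hb hc hd D_neq0.
have ac_bd : (a != c) || (b != d).
  by apply: contraNT D_neq0; rewrite negb_or !negbK => /andP[/eqP-> /eqP->]; rewrite subrr.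
set D := p a b * q c d - p c d * q a b in D_neq0 *.
pose T := perm_mx3 F a b c d.
pose s := (frob q T * p c d - frob p T * q c d) / D.
pose r := (frob p T * q a b - frob q T * p a b) / D.
exists (fun i j => T i j + s * unit_mx3 F a b i j + r * unit_mx3 F c d i j).
rewrite !frob_shift // /s /r; split; last exact: det3_perm_mx3_shift.
- by move: (frob p T) (frob q T) => x y; rewrite /D; field.
- by move: (frob p T) (frob q T) => x y; rewrite /D; field.
Qed.

Lemma invertible_in_kernel1 p : exists m, frob p m = 0 /\ det3 m != 0.
Proof.
have [/existsP[[a ha] /existsP[[b hb] /= pab_neq0]]|p0] :=
  boolP [exists a : 'I_3, exists b : 'I_3, p a b != 0].
  pose c : nat := a == 0%N.
  have hc : (c < 3)%N by rewrite /c; case: (a == 0%N).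
  have minorE : p a b * unit_mx3 F c b c b - p c b * unit_mx3 F c b a b = p a b.
    rewrite /unit_mx3 !eqxx /c.
    by case: (a =P 0%N) => [->|/eqP/negbTE->] /=; rewrite ?eqxx ?andbF mulr1 mulr0 subr0.
  rewrite -minorE in pab_neq0.
  by have [m [pm0 _ dm]] := invertible_in_kernel2_of_minor ha hb hc hb pab_neq0; exists m.
have pE a b : (a < 3)%N -> (b < 3)%N -> p a b = 0.
  move=> ha hb; apply/eqP; apply: contraNT p0 => pab_neq0.
  by apply/existsP; exists (Ordinal ha); apply/existsP; exists (Ordinal hb).
exists (fun i j => (i == j)%:R); rewrite /frob !pE // !mul0r !addr0; split => //.
by apply: sqr1_neq0; rewrite /det3 /=; ring.
Qed.

Lemma frob_proportional p q a b m : (a < 3)%N -> (b < 3)%N ->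
  (forall c d, (c < 3)%N -> (d < 3)%N -> p a b * q c d = p c d * q a b) ->
  p a b * frob q m = q a b * frob p m.
Proof. by move=> ha hb pq; rewrite /frob !mulrDr !mulrA !pq //; ring. Qed.

Lemma invertible_in_kernel2 p q : exists m, [/\ frob p m = 0, frob q m = 0 & det3 m != 0].
Proof.
pose minor (a b c d : 'I_3) := p a b * q c d - p c d * q a b.
have [/existsP[a /existsP[b /existsP[c /existsP[d minor_neq0]]]]|] :=
  boolP [exists a, exists b, exists c, exists d, minor a b c d != 0].
  exact: invertible_in_kernel2_of_minor minor_neq0.
move=> no_minor.
have pq c d : (c < 3)%N -> (d < 3)%N -> forall a b : 'I_3, p a b * q c d = p c d * q a b.
  move=> hc hd a b; apply/eqP; rewrite -subr_eq0; apply: contraNT no_minor => minor_neq0.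
  by apply/existsP; exists a; apply/existsP; exists b; apply/existsP; exists (Ordinal hc);
    apply/existsP; exists (Ordinal hd).
have [/existsP[a /existsP[b pab_neq0]]|] :=
  boolP [exists a : 'I_3, exists b : 'I_3, p a b != 0].
  have [m [pm0 dm]] := invertible_in_kernel1 p.
  exists m; split=> //; apply: (mulfI pab_neq0).
  by rewrite frob_proportional // => [|c d hc hd]; rewrite ?pm0 ?mulr0 ?pq.
move=> p0.
have pE c d : (c < 3)%N -> (d < 3)%N -> p c d = 0.
  move=> hc hd; apply/eqP; apply: contraNT p0 => pcd_neq0.
  by apply/existsP; exists (Ordinal hc); apply/existsP; exists (Ordinal hd).
have [m [qm0 dm]] := invertible_in_kernel1 q.
by exists m; rewrite /frob !pE // !mul0r !addr0.
Qed.

End InvertibleInKernel.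

Lemma det3_mxE (R : comNzRingType) (f : nat -> nat -> R) :
  \det (\matrix_(i < 3, j < 3) f i j) = det3 f.
Proof.
rewrite (expand_det_row _ ord0) !big_ord_recr big_ord0 /= /cofactor.
rewrite !(expand_det_row _ ord0) !big_ord_recr big_ord0 /= /cofactor.
by rewrite !det_mx11 !mxE /= !big_ord0 /det3; ring.
Qed.

Lemma det3E (R : comNzRingType) (M : 'M[R]_3) :
  \det M = det3 (fun i j => M (inord i) (inord j)).
Proof.
by rewrite -det3_mxE; congr (\det _); apply/matrixP => i j; rewrite mxE !inord_val.
Qed.

Lemma det3_ext (R : comNzRingType) (f g : nat -> nat -> R) :
  (forall a b, (a < 3)%N -> (b < 3)%N -> f a b = g a b) -> det3 f = det3 g.
Proof. by move=> fg; rewrite /det3 !fg. Qed.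

Lemma rmorph_det3 (R S : comNzRingType) (h : {rmorphism R -> S}) (f : nat -> nat -> R) :
  h (det3 f) = det3 (fun a b => h (f a b)).
Proof. by rewrite /det3 !(rmorphB, rmorphD, rmorphM). Qed.

Lemma det3_homog n (R : comNzRingType) (f : nat -> nat -> {mpoly R[n]}) :
  (forall a b, f a b \is 1.-homog) -> det3 f \is 3.-homog.
Proof.
move=> f_homog.
have quad a b c d : f a b * f c d \is 2.-homog.
  exact: (dhomogM (f_homog _ _) (f_homog _ _)).
have cubic a b q : q \is 2.-homog -> f a b * q \is 3.-homog.
  exact: (dhomogM (f_homog _ _)).
by rewrite /det3; apply: rpredD; first apply: rpredB; apply: cubic; apply: rpredB.
Qed.

Lemma meval_linear n (R : comNzRingType) (p : {mpoly R[n]}) (v : 'I_n -> R) :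
  p \is 1.-homog -> p.@[v] = \sum_(i < n) p@_U_(i) * v i.
Proof.
move=> p_homog.
suff {1}-> : p = \sum_(i < n) p@_U_(i) *: 'X_i.
  by rewrite raddf_sum; apply: eq_bigr => i _; rewrite /= mevalZ mevalXU.
apply/mpolyP => m; rewrite raddf_sum /=.
under eq_bigr => i _ do rewrite mcoeffZ mcoeffX.
have [/mdeg1P[j /eqP ->]|m_ndeg1] := boolP (mdeg m == 1%N).
  rewrite (bigD1 j) //= eqxx mulr1 big1 ?addr0 // => i ij.
  by rewrite eq_mnm1 (negbTE ij) mulr0.
rewrite (dhomog_nemf_coeff p_homog) ?m_ndeg1 // big1 // => i _.
rewrite (_ : (U_(i) == m)%MM = false) ?mulr0 //.
by apply: contraNF m_ndeg1 => /eqP <-; rewrite mdeg1.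
Qed.

Definition xvar (r c : nat) : {mpoly CC[12]} := 'X_(inord (r * 3 + c)%N).

Definition at_mx (X : nat -> nat -> CC) (q : 'I_12) : CC := X (q %/ 3)%N (q %% 3)%N.

Lemma xvar_homog r c : xvar r c \is 1.-homog.
Proof. by rewrite dhomogX /= mdeg1. Qed.

Lemma meval_xvar X r c : (r < 4)%N -> (c < 3)%N -> (xvar r c).@[at_mx X] = X r c.
Proof.
move=> hr hc; rewrite mevalXU /at_mx inordK; last by lia.
by rewrite divnMDl // modnMDl (divn_small hc) (modn_small hc) addn0.
Qed.

Lemma maxminorE (i : 'I_3) : maxminor i = det3 (fun a b => xvar (bump i a) b).
Proof.
rewrite /maxminor det3E; apply: det3_ext => a b ha hb.
by rewrite !mxE /= !inordK.
Qed.

Lemma meval_maxminor (i : 'I_3) X :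
  (maxminor i).@[at_mx X] = det3 (fun a b => X (bump i a) b).
Proof.
rewrite maxminorE rmorph_det3; apply: det3_ext => a b ha hb.
by rewrite /= meval_xvar //; case: i => [[|[|[|//]]] ?]; case: a ha => [|[|[|//]]].
Qed.

Lemma maxminor_homog (i : 'I_3) : maxminor i \is 3.-homog.
Proof. by rewrite maxminorE; apply: det3_homog => a b; exact: xvar_homog. Qed.

Definition slice (k : nat) (m : nat -> nat -> CC) (r c : nat) : CC :=
  if r == k then 0 else m (unbump k r) c.

Lemma maxminor_slice (i k : 'I_3) m :
  (maxminor i).@[at_mx (slice k m)] = (i == k)%:R * det3 m.
Proof.
rewrite meval_maxminor.
by case: i k => [[|[|[|//]]] ?] [[|[|[|//]]] ?]; rewrite /det3 /slice /=; ring.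
Qed.

Lemma sum_slice (w : nat -> CC) (k : 'I_3) m :
  \sum_(q < 12) w q * at_mx (slice k m) q = frob (fun a b => w (bump k a * 3 + b)%N) m.
Proof.
rewrite !big_ord_recr big_ord0 /=.
by case: k => [[|[|[|//]]] ?]; rewrite /frob /at_mx /slice /=; ring.
Qed.

Lemma meval_slice_linear (l : {mpoly CC[12]}) (k : 'I_3) m : l \is 1.-homog ->
  l.@[at_mx (slice k m)] = frob (fun a b => l@_U_(inord (bump k a * 3 + b)%N)) m.
Proof.
move=> l_homog; rewrite meval_linear //.
under eq_bigr => q _ do rewrite -[q in U_(q)%MM]inord_val.
exact: (sum_slice (fun q => l@_U_(inord q))).
Qed.

Section CubicStrength.
Variable n : nat.
Implicit Types (F g h : {mpoly CC[n]}).

Lemma cubic_part_of_product g h : homog_pos g -> homog_pos h ->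
  exists l q, l \is 1.-homog /\ pihomog mdeg 3 (g * h) = l * q.
Proof.
move=> [d [d_gt0 g_homog]] [e [e_gt0 h_homog]].
have gh_homog := dhomogM g_homog h_homog.
have [de3|de_neq3] := eqVneq (d + e)%N 3%N; last first.
  by exists 0, 0; rewrite dhomog0 mulr0 (pihomog_ne0 de_neq3 gh_homog).
rewrite pihomog_dE -?de3 //.
case: d d_gt0 g_homog gh_homog de3 => [|[|[|d]]] // _ g_homog _ de3.
- by exists g, h.
- by exists h, g; rewrite mulrC -(_ : e = 1%N) //; lia.
- by lia.
Qed.

(* Only the degree-3 part of each product matters for a cubic. *)
Lemma cubic_strength1 F : F \is 3.-homog -> strength_le F 1 ->
  exists l0 q0 l1 q1, [/\ l0 \is 1.-homog, l1 \is 1.-homog & F = l0 * q0 + l1 * q1].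
Proof.
move=> F_homog [g [h [gh_pos F_sum]]].
rewrite -(pihomog_dE F_homog) F_sum !big_ord_recl big_ord0 /= addr0 pihomogD.
have [l0 [q0 [l0_homog ->]]] := cubic_part_of_product (gh_pos ord0).1 (gh_pos ord0).2.
have [l1 [q1 [l1_homog ->]]] :=
  cubic_part_of_product (gh_pos (lift ord0 ord0)).1 (gh_pos (lift ord0 ord0)).2.
by exists l0, q0, l1, q1.
Qed.

Lemma homog_pos0 : homog_pos (0 : {mpoly CC[n]}).
Proof. by exists 1%N; rewrite dhomog0. Qed.

Lemma strength_le0_1 F : strength_le F 0 -> strength_le F 1.
Proof.
move=> [g [h [gh_pos ->]]].
exists (fun i : 'I_2 => if val i == 0%N then g ord0 else 0).
exists (fun i : 'I_2 => if val i == 0%N then h ord0 else 0).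
split=> [i|]; first by case: ifP => _; [exact: gh_pos | split; exact: homog_pos0].
by rewrite !big_ord_recr !big_ord0 /= !add0r mulr0 addr0; congr (g _ * h _); apply: val_inj.
Qed.

End CubicStrength.

Lemma lincomb_maxminor_homog (c : 'I_3 -> CC) : lincomb maxminor c \is 3.-homog.
Proof. by apply: rpred_sum => i _; apply/rpredZ/maxminor_homog. Qed.

Lemma lincomb_maxminor_slice (c : 'I_3 -> CC) (k : 'I_3) m :
  (lincomb maxminor c).@[at_mx (slice k m)] = c k * det3 m.
Proof.
rewrite raddf_sum (bigD1 k) //= big1 => [|i ik].
  by rewrite mevalZ maxminor_slice eqxx mul1r addr0.
by rewrite mevalZ maxminor_slice (negbTE ik) mul0r mulr0.
Qed.

Lemma lincomb_maxminor_strength_gt1 (c : 'I_3 -> CC) :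
  nontrivial c -> ~ strength_le (lincomb maxminor c) 1.
Proof.
move=> [k ck_neq0] /(cubic_strength1 (lincomb_maxminor_homog c)).
move=> [l0 [q0 [l1 [q1 [l0_homog l1_homog Fl]]]]].
pose p0 a b := l0@_U_(inord (bump k a * 3 + b)%N).
pose p1 a b := l1@_U_(inord (bump k a * 3 + b)%N).
have [m [l0m l1m dm]] := invertible_in_kernel2 p0 p1.
have := lincomb_maxminor_slice c k m.
rewrite Fl mevalD !mevalM (meval_slice_linear k m l0_homog).
rewrite (meval_slice_linear k m l1_homog) -/p0 -/p1.
rewrite (l0m : frob (R := CC) p0 m = 0) (l1m : frob (R := CC) p1 m = 0).
rewrite !mul0r addr0 => /esym/eqP.
by rewrite mulf_eq0 (negbTE ck_neq0) /=; apply/negP.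
Qed.

Lemma lincomb_maxminor_nonconst (c : 'I_3 -> CC) :
  nontrivial c -> ~ is_const (lincomb maxminor c).
Proof.
move=> [k ck_neq0] [C FC].
have := lincomb_maxminor_slice c k (fun i j => (i == j)%:R).
have := lincomb_maxminor_slice c k (fun _ _ => 0).
rewrite FC !mevalC /det3 /= => ->; rewrite !(mul0r, mulr0, mul1r, subr0, addr0) => /eqP.
by rewrite mulr1 eq_sym (negbTE ck_neq0).
Qed.

Lemma maxminor_coll_strength_ge2 : coll_strength_ge maxminor 2.
Proof.
move=> c c_nt s [[F_const _]|[_ [k [-> [F_le_k k_min]]]]].
  by have := lincomb_maxminor_nonconst c_nt F_const.
rewrite lez_nat; case: k F_le_k {k_min} => [|[|//]] F_le_k.
- by have := lincomb_maxminor_strength_gt1 c_nt (strength_le0_1 F_le_k).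
- by have := lincomb_maxminor_strength_gt1 c_nt F_le_k.
Qed.

Definition coord0 : 'I_3 -> CC := fun i => (i == ord0)%:R.

Lemma coord0_nontrivial : nontrivial coord0.
Proof. by exists ord0; rewrite /coord0 eqxx oner_neq0. Qed.

Lemma lincomb_coord0 : lincomb maxminor coord0 = maxminor ord0.
Proof.
rewrite /lincomb (bigD1 ord0) //= big1 => [|i /negbTE i_neq0].
  by rewrite /coord0 eqxx scale1r addr0.
by rewrite /coord0 i_neq0 scale0r.
Qed.

(* Laplace expansion of [maxminor 0] along row 1 of the generic matrix. *)
Lemma maxminor0_strength_le2 : strength_le (maxminor ord0) 2.
Proof.
pose minor2 a b := xvar 2 a * xvar 3 b - xvar 2 b * xvar 3 a.
exists (fun i : 'I_3 => (-1) ^+ i * xvar 1 i).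
exists (fun i : 'I_3 => minor2 (bump i 0) (bump i 1)).
split=> [i|].
  split; [exists 1%N | exists 2%N]; split=> //.
  - by rewrite rpredMsign xvar_homog.
  - by apply: rpredB; apply: (dhomogM (xvar_homog _ _) (xvar_homog _ _)).
by rewrite maxminorE !big_ord_recr big_ord0 /= /det3 /minor2 /=; ring.
Qed.

Lemma lincomb_coord0_strength : strength_is (lincomb maxminor coord0) 2.
Proof.
right; split; first exact: lincomb_maxminor_nonconst coord0_nontrivial.
exists 2%N; split=> //; split; first by rewrite lincomb_coord0; apply: maxminor0_strength_le2.
move=> [|[|//]] _ F_le.
- exact: lincomb_maxminor_strength_gt1 coord0_nontrivial (strength_le0_1 F_le).
- exact: lincomb_maxminor_strength_gt1 coord0_nontrivial F_le.
Qed.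

(* The signed maximal minors are orthogonal to every column of the generic
   matrix (expand a 4x4 determinant with a repeated column).  Eliminating the
   fourth minor between the relations for columns 0 and 1 puts
   g * maxminor 2 in the ideal of maxminor 0 and maxminor 1, where g is the
   2x2 minor on rows 2, 3 and columns 0, 1; at the point [X] both of those
   minors vanish while g does not. *)
Lemma maxminor_not_regular : ~ regular_seq maxminor.
Proof.
move=> [nzd _].
pose g := xvar 2 0 * xvar 3 1 - xvar 2 1 * xvar 3 0.
pose i2 : 'I_3 := ord_max.
have g_zd : in_ideal_first maxminor i2 (g * maxminor i2).
  exists (fun i : 'I_3 => if i == ord0
    then xvar 0 1 * xvar 3 0 - xvar 0 0 * xvar 3 1
    else xvar 1 0 * xvar 3 1 - xvar 1 1 * xvar 3 0).
  by rewrite big_mkcond !big_ord_recr big_ord0 /= !maxminorE /det3 /g /=; ring.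
have [a g_in] := nzd i2 g g_zd.
pose X (r c : nat) : CC := if r == 3%N then (c == 1%N)%:R else (c == 0%N)%:R.
have gX : g.@[at_mx X] = 1.
  by rewrite /g mevalB !mevalM !meval_xvar // /X /= mulr0 subr0 mulr1.
have f_X (i : 'I_3) : (i < 2)%N -> (maxminor i).@[at_mx X] = 0.
  by rewrite meval_maxminor; case: i => [[|[|//]] ?] _; rewrite /det3 /X /=; ring.
move: (congr1 (meval (at_mx X)) g_in).
rewrite gX raddf_sum big1 => [/eqP|i i_lt2]; first by rewrite oner_eq0.
by rewrite /= mevalM f_X ?mulr0.
Qed.

Theorem theorem7p4 :
  (forall i : 'I_3, maxminor i \is 3.-homog) /\
  ~ regular_seq maxminor /\
  coll_strength_is maxminor 2 /\
  N_gt 3 3 2.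
Proof.
split; first exact: maxminor_homog.
split; first exact: maxminor_not_regular.
split.
  split; first exact: maxminor_coll_strength_ge2.
  by exists coord0; split; [exact: coord0_nontrivial | exact: lincomb_coord0_strength].
exists 12%N, maxminor; split; first exact: maxminor_homog.
by split; [exact: maxminor_coll_strength_ge2 | exact: maxminor_not_regular].
Qed.
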